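(* Let $G\subset\mathbb{K}[\mathbf{x}][\boldsymbol{\partial}]$ be a finite set and let $f\in\mathbb{K}[[x_1,\dots,x_n]]$ be a nonzero formal power series solution of $G$ (i.e. $P(f)=0$ for all $P\in G$) with initial exponent $\mathbf{w}$. Then $\mathbf{w}$ is a root of $\mathrm{ind}(P)$ for each $P\in G$.
   Context: $\mathbb{K}$ is a field of characteristic zero; $\mathbb{K}[\mathbf{x}][\boldsymbol{\partial}]$ is the ring of partial differential operators in $\partial_1,\dots,\partial_n$ with coefficients in $\mathbb{K}[x_1,\dots,x_n]$ ($\partial_i f=f\partial_i+\partial f/\partial x_i$), acting naturally on $\mathbb{K}[[\mathbf{x}]]$. $\prec$ is a fixed graded term order on $\mathbb{N}^n$, applied to monomials $\mathbf{x}^{\mathbf{u}}$; the initial exponent of nonzero $f$ is the $\prec$-smallest exponent occurring in $f$. Indicial polynomial: let $\delta_i=x_i\partial_i$. For nonzero $P=\sum_{|\mathbf{u}|\le m}c_{\mathbf{u}}\boldsymbol{\partial}^{\mathbf{u}}$ of order $m$ (some $c_{\mathbf{u}}\ne0$ with $|\mathbf{u}|=m$), with $\mathbf{m}=(m,\dots,m)$ write uniquely $\mathbf{x}^{\mathbf{m}}P=\sum_{\mathbf{v}\in T}\mathbf{x}^{\mathbf{v}}\big(\sum_{|\mathbf{u}|\le m}c_{\mathbf{u},\mathbf{v}}\boldsymbol{\delta}^{\mathbf{u}}\big)$ with $c_{\mathbf{u},\mathbf{v}}\in\mathbb{K}$ and nonzero inner sums; with $\mathbf{v}_0$ the $\prec$-minimal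 element of $T$, $\mathrm{ind}(P)=\sum_{|\mathbf{u}|\le m}c_{\mathbf{u},\mathbf{v}_0}\mathbf{y}^{\mathbf{u}}\in\mathbb{K}[y_1,\dots,y_n]$; $\mathrm{ind}(0)=0$. *)

From HB Require Import structures.
From mathcomp Require Import all_boot all_order all_algebra.
From mathcomp Require Export mpoly.
Set Implicit Arguments. Unset Strict Implicit. Unset Printing Implicit Defensive.
Import Order.TTheory GRing.Theory Num.Theory.
Local Open Scope ring_scope.

(* Formal power series in x_1..x_n over K, as coefficient functions
   (coefficient of x^a at the exponent a). *)
Definition powser (K : fieldType) (n : nat) := 'X_{1..n} -> K.

(* Partial differential operators in K[x][d]: an operator
     P = sum_u c_u(x) d^u   (coefficients written on the left, normal form)
   is represented by the polynomial in the "d" variables whose coefficient at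
   the exponent u is c_u(x) in K[x_1..x_n]. *)
Definition diffop (K : fieldType) (n : nat) := {mpoly {mpoly K[n]}[n]}.

Section Action.
Variables (K : fieldType) (n : nat).

Definition pder (u : 'X_{1..n}) (f : powser K n) : powser K n :=
  fun a => f (a + u)%MM * (\prod_(i < n) ((a i + u i) ^_ (u i))%N)%:R.

Definition pmulpoly (c : {mpoly K[n]}) (g : powser K n) : powser K n :=
  fun b => \sum_(v <- msupp c | (v <= b)%MM) c@_v * g (b - v)%MM.

Definition dapply (P : diffop K n) (f : powser K n) : powser K n :=
  fun b => \sum_(u <- msupp P) pmulpoly P@_u (pder u f) b.

Definition dorder (P : diffop K n) : nat := \max_(u <- msupp P) mdeg u.

Definition ffpoly (i : 'I_n) (k : nat) : {mpoly K[n]} :=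
  \prod_(j < k) ('X_i - (j%:R)%:MP).

(* delta^u = x^u d^u = prod_i delta_i(delta_i - 1)...(delta_i - u_i + 1),
   written as a polynomial in y (y_i standing for delta_i). *)
Definition delta_poly (u : 'X_{1..n}) : {mpoly K[n]} :=
  \prod_(i < n) ffpoly i (u i).

(* x^m P = sum_v x^v (sum_u c_{u,v} delta^u); indpart P v is the inner
   polynomial (in y) attached to x^v, m = (order P, ..., order P).
   Indeed x^m c_u(x) d^u = sum_w c_{u,w} x^(w + m - u) x^u d^u. *)
Definition mvec (m : nat) : 'X_{1..n} := [multinom m | i < n].

Definition indpart (P : diffop K n) (v : 'X_{1..n}) : {mpoly K[n]} :=
  let m := mvec (dorder P) in
  \sum_(u <- msupp P)
     \sum_(w <- msupp P@_u | (w + m - u)%MM == v) (P@_u)@_w *: delta_poly u.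

Definition indT (P : diffop K n) : seq 'X_{1..n} :=
  let m := mvec (dorder P) in
  [seq v <- undup (flatten [seq [seq (w + m - u)%MM | w <- msupp P@_u]
                           | u <- msupp P]) | indpart P v != 0].

Definition seqmin (lt : rel 'X_{1..n}) (d : 'X_{1..n}) (s : seq 'X_{1..n}) :=
  foldr (fun a b => if lt a b then a else b) (head d s) s.

(* indicial polynomial ind(P) w.r.t. the term order lt; ind(0) = 0
   (T is empty for P = 0 and then indpart P _ = 0). *)
Definition indicial (lt : rel 'X_{1..n}) (P : diffop K n) : {mpoly K[n]} :=
  indpart P (seqmin lt 0%MM (indT P)).

End Action.

Definition graded_term_order (n : nat) (lt : rel 'X_{1..n}) : Prop :=
  [/\ irreflexive lt, transitive lt,
      (forall a b, a != b -> lt a b || lt b a),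
      (forall a b c, lt a b -> lt (a + c)%MM (b + c)%MM) &
      (forall a b, (mdeg a < mdeg b)%N -> lt a b)].

Definition initial_exponent (K : fieldType) (n : nat) (lt : rel 'X_{1..n})
  (f : powser K n) (w : 'X_{1..n}) : Prop :=
  f w != 0 /\ (forall a, f a != 0 -> a != w -> lt w a).

(* Write m for (ord P, ..., ord P).  Since x^m c(x) d^u = sum_v c_v x^(v+m-u) delta^u
   and delta^u acts on x^a as multiplication by the falling factorial a^_u, the
   coefficient of x^t in x^m P(f) is  sum_v f_(t-v) (indpart P v)(t-v).  Take
   t = v0 + w with v0 the least element of T and w the initial exponent of f.  For every other
   v in T with f_(t-v) <> 0 we would get w < t - v and v0 < v, hence
   t = w + v0 < (t - v) + v = t by compatibility of the term order with addition.
   Only the term v = v0 survives, so f_w ind(P)(w) = 0 and f_w <> 0. *)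
From mathcomp Require Import all_boot all_order all_algebra.
From mathcomp Require Import mpoly.
From mathcomp Require Import zify.
Set Implicit Arguments. Unset Strict Implicit. Unset Printing Implicit Defensive.
Import GRing.Theory.
Local Open Scope ring_scope.

Lemma big_uniq_if_eq (R : nmodType) (I : eqType) (r : seq I) (x : I)
    (P : pred I) (F : I -> R) :
  uniq r -> x \in r ->
  \sum_(y <- r | P y) (if x == y then F y else 0) = if P x then F x else 0.
Proof.
move=> r_uniq xr; rewrite (big_rem x) //= eqxx big1_seq ?addr0 //.
move=> y /andP[_]; rewrite mem_rem_uniq // inE => /andP[yx _].
by rewrite eq_sym (negbTE yx).
Qed.

Section IndicialPolynomial.
Variables (K : fieldType) (n : nat).
Implicit Types (P : diffop K n) (f : powser K n) (a t u v : 'X_{1..n}).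

Definition mffact a u : nat := (\prod_(i < n) (a i ^_ u i))%N.

Lemma mffact_eq0 a u i : (a i < u i)%N -> mffact a u = 0%N.
Proof. by move=> ltau; rewrite /mffact (bigD1 i) //= ffact_small // mul0n. Qed.

Lemma meval_ffpoly a i k :
  (ffpoly K i k).@[fun j => ((a j)%:R : K)] = ((a i ^_ k)%:R : K).
Proof.
elim: k => [|k IHk]; first by rewrite /ffpoly big_ord0 meval1.
rewrite /ffpoly big_ord_recr /= mevalM -/(ffpoly K i k) IHk.
rewrite mevalB mevalXU mevalC ffactnSr natrM.
case: (leqP k (a i)) => [le_k_a | lt_a_k]; first by rewrite natrB.
by rewrite ffact_small //= !mul0r.
Qed.

Lemma meval_delta_poly a u :
  (delta_poly K u).@[fun j => ((a j)%:R : K)] = ((mffact a u)%:R : K).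
Proof.
rewrite /delta_poly rmorph_prod /mffact natr_prod.
by apply: eq_bigr => i _; apply: meval_ffpoly.
Qed.

Lemma mnm_nleP a b : ~~ (a <= b)%MM -> exists i, (b i < a i)%N.
Proof.
move=> nle_ab; apply/existsP; apply: contraR nle_ab => /existsPn gt_ab.
by apply/mnm_lepP => i; rewrite leqNgt gt_ab.
Qed.

Lemma msupp_le_dorder P u i : u \in msupp P -> (u i <= dorder P)%N.
Proof.
move=> uP; apply: leq_trans (_ : mdeg u <= _)%N.
  by rewrite mdegE (bigD1 i) //= leq_addr.
exact: (leq_bigmax_seq _ (P := xpredT)).
Qed.

Lemma mvec_dorderE P i : mvec n (dorder P) i = dorder P.
Proof. by rewrite mnmE. Qed.

Definition indsupp P : seq 'X_{1..n} :=
  undup (flatten [seq [seq (v + mvec n (dorder P) - u)%MM | v <- msupp P@_u]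
                 | u <- msupp P]).

Lemma indsupp_uniq P : uniq (indsupp P).
Proof. exact: undup_uniq. Qed.

Lemma mem_indsupp P u v : u \in msupp P -> v \in msupp P@_u ->
  (v + mvec n (dorder P) - u)%MM \in indsupp P.
Proof.
move=> uP vPu; rewrite mem_undup; apply/flattenP.
exists [seq (x + mvec n (dorder P) - u)%MM | x <- msupp P@_u].
  by apply/mapP; exists u.
by apply/mapP; exists v.
Qed.

Lemma indpart_eq0 P v : v \notin indsupp P -> indpart P v = 0.
Proof.
move=> vNP; rewrite /indpart /= big_seq; apply: big1 => u uP.
rewrite big_seq_cond; apply: big1 => x /andP[xPu /eqP def_v].
by move: vNP; rewrite -def_v mem_indsupp.
Qed.

Lemma mem_indT P v : (v \in indT P) = (v \in indsupp P) && (indpart P v != 0).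
Proof. by rewrite /indT mem_filter andbC. Qed.

Lemma meval_indpart P v a :
  (indpart P v).@[fun j => ((a j)%:R : K)] =
  \sum_(u <- msupp P) \sum_(x <- msupp P@_u | (x + mvec n (dorder P) - u)%MM == v)
     P@_u@_x * (mffact a u)%:R.
Proof.
rewrite /indpart /= raddf_sum; apply: eq_bigr => u _.
rewrite raddf_sum; apply: eq_bigr => x _.
by apply: (etrans (mevalZ _ _ _)); rewrite meval_delta_poly.
Qed.

(* The coefficient of x^t in x^m P(f), m = (ord P, ..., ord P), computed from
   x^m c_{u,x} x^x d^u = c_{u,x} x^(x + m - u) x^u d^u. *)
Definition xm_dapply_coef P f t : K :=
  \sum_(u <- msupp P) \sum_(x <- msupp P@_u | (x + mvec n (dorder P) - u <= t)%MM)
     P@_u@_x * (f (t - (x + mvec n (dorder P) - u))%MM *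
                (mffact (t - (x + mvec n (dorder P) - u))%MM u)%:R).

Lemma xm_dapply_coef_indpart P f t :
  xm_dapply_coef P f t =
  \sum_(v <- indsupp P | (v <= t)%MM)
     f (t - v)%MM * (indpart P v).@[fun j => (((t - v)%MM j)%:R : K)].
Proof.
symmetry; under eq_bigr => v _ do rewrite meval_indpart mulr_sumr.
rewrite exchange_big /=; apply: eq_big_seq => u uP.
under eq_bigr => v _ do rewrite mulr_sumr big_mkcond /=.
rewrite exchange_big /= [RHS]big_mkcond /=; apply: eq_big_seq => x xPu.
rewrite (big_uniq_if_eq _ (fun v => f (t - v)%MM * (P@_u@_x * (mffact (t - v) u)%:R)))
  ?indsupp_uniq ?mem_indsupp //.
by case: ifP => // _; rewrite mulrCA.
Qed.

Lemma xm_dapply_coef_eq0 P f t :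
  ~~ (mvec n (dorder P) <= t)%MM -> xm_dapply_coef P f t = 0.
Proof.
case/mnm_nleP => i lt_t_m.
apply: big1_seq => u /andP[_ uP]; apply: big1 => x /mnm_lepP le_x_t.
rewrite (@mffact_eq0 _ _ i) ?mulr0n ?mulr0 //.
move: (le_x_t i) (msupp_le_dorder i uP) lt_t_m.
by rewrite !(mnmDE, mnmBE) !mvec_dorderE; lia.
Qed.

Lemma xm_dapply_coefE P f t : (mvec n (dorder P) <= t)%MM ->
  xm_dapply_coef P f t = dapply P f (t - mvec n (dorder P))%MM.
Proof.
move/mnm_lepP=> le_m_t; apply: eq_big_seq => u uP.
rewrite /pmulpoly /pder big_mkcond [RHS]big_mkcond; apply: eq_bigr => x _.
have le_u_m i := msupp_le_dorder i uP.
have [/mnm_lepP le_x_tm | /mnm_nleP[i lt_tm_x]] :=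
  boolP (x <= t - mvec n (dorder P))%MM.
  have -> : (x + mvec n (dorder P) - u <= t)%MM.
    apply/mnm_lepP => i; move: (le_x_tm i) (le_m_t i) (le_u_m i).
    by rewrite !(mnmDE, mnmBE) !mvec_dorderE; lia.
  have -> : (t - (x + mvec n (dorder P) - u))%MM = (t - mvec n (dorder P) - x + u)%MM.
    apply/mnmP => i; move: (le_x_tm i) (le_m_t i) (le_u_m i).
    by rewrite !(mnmDE, mnmBE) !mvec_dorderE; lia.
  by congr (_ * (_ * _%:R)); apply: eq_bigr => i _; rewrite mnmDE.
case: ifP => // /mnm_lepP le_x_t.
rewrite (@mffact_eq0 _ _ i) ?mulr0n ?mulr0 //.
move: (le_x_t i) (le_m_t i) (le_u_m i) lt_tm_x.
by rewrite !(mnmDE, mnmBE) !mvec_dorderE; lia.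
Qed.

Lemma sum_indpart_eq0 P f t : (forall b, dapply P f b = 0) ->
  \sum_(v <- indsupp P | (v <= t)%MM)
     f (t - v)%MM * (indpart P v).@[fun j => (((t - v)%MM j)%:R : K)] = 0.
Proof.
move=> Pf0; rewrite -xm_dapply_coef_indpart.
have [le_m_t | /xm_dapply_coef_eq0 //] := boolP (mvec n (dorder P) <= t)%MM.
by rewrite xm_dapply_coefE.
Qed.

Section TermOrder.
Variable lt : rel 'X_{1..n}.
Hypothesis lt_irr : irreflexive lt.
Hypothesis lt_trans : transitive lt.
Hypothesis lt_total : forall a b, a != b -> lt a b || lt b a.
Hypothesis lt_add : forall a b c, lt a b -> lt (a + c)%MM (b + c)%MM.

Lemma foldr_min_le z s x : x \in s ->
  let r := foldr (fun a b => if lt a b then a else b) z s in (r == x) || lt r x.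
Proof.
elim: s => //= a s IHs; rewrite inE.
set r := foldr _ _ _ in IHs *.
case: ifP => lt_a_r /orP[/eqP-> | /IHs /orP[/eqP<- | lt_r_x]].
- by rewrite eqxx.
- by rewrite lt_a_r orbT.
- by rewrite (lt_trans lt_a_r lt_r_x) orbT.
- have [-> //| r_neq_a] := eqVneq r a.
  by case/orP: (lt_total r_neq_a) => [-> | lt_a_r']; rewrite ?orbT // lt_a_r' in lt_a_r.
- by rewrite eqxx.
- by rewrite lt_r_x orbT.
Qed.

Lemma seqmin_lt d s x : x \in s -> x != seqmin lt d s -> lt (seqmin lt d s) x.
Proof.
by move=> xs; rewrite /seqmin; have /orP[/eqP-> | //] := foldr_min_le (head d s) xs; rewrite eqxx.
Qed.

Lemma initial_exponent_coef_eq0 f w v0 v a :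
  initial_exponent lt f w -> lt v0 v -> (a + v = w + v0)%MM -> f a = 0.
Proof.
case=> _ w_min lt_v0_v def_t; apply/eqP; apply: contraT => fa_neq0.
have [def_a | a_neq_w] := eqVneq a w.
  by move: def_t lt_v0_v; rewrite def_a => /addmI ->; rewrite lt_irr.
have lt1 : lt (w + v0)%MM (a + v0)%MM by apply: lt_add; apply: w_min.
have lt2 : lt (a + v0)%MM (a + v)%MM by rewrite (addmC a v0) (addmC a v) lt_add.
by move: (lt_trans lt1 lt2); rewrite def_t lt_irr.
Qed.

Lemma indicial_root_initial_exponent P f w :
  (forall b, dapply P f b = 0) -> initial_exponent lt f w ->
  (indicial lt P).@[fun i => ((w i)%:R : K)] = 0.
Proof.
move=> Pf0 w_init; have [fw_neq0 _] := w_init; rewrite /indicial.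
set v0 := seqmin lt 0%MM (indT P).
have [-> | ind_neq0] := eqVneq (indpart P v0) 0; first by rewrite meval0.
have v0P : v0 \in indsupp P by apply: contraR ind_neq0 => /indpart_eq0 ->.
set t := (v0 + w)%MM; have tv0 : (t - v0)%MM = w by rewrite /t addmC addmK.
have := sum_indpart_eq0 t Pf0.
rewrite (big_rem v0) //= lem_addr tv0 big1_seq ?addr0 => [/eqP|v].
  by rewrite mulf_eq0 (negbTE fw_neq0) => /eqP.
rewrite mem_rem_uniq ?indsupp_uniq // inE => /andP[le_v_t /andP[v_neq_v0 vP]].
have [-> | indv_neq0] := eqVneq (indpart P v) 0; first by rewrite meval0 mulr0.
have lt_v0_v : lt v0 v by apply: seqmin_lt; rewrite // mem_indT vP.
by rewrite (initial_exponent_coef_eq0 w_init lt_v0_v) ?mul0r // submK // addmC.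
Qed.

End TermOrder.

End IndicialPolynomial.

Theorem mainTheorem8 (K : fieldType) (n : nat)
  (charK0 : [pchar K] =i pred0)
  (lt : rel 'X_{1..n}) (hlt : graded_term_order lt)
  (G : seq (diffop K n)) (f : powser K n) (w : 'X_{1..n})
  (fnz : exists a, f a != 0)
  (fsol : forall P, P \in G -> forall b, dapply P f b = 0)
  (hw : initial_exponent lt f w) :
  forall P, P \in G -> (indicial lt P).@[fun i => ((w i)%:R : K)] = 0.
Proof.
case: hlt => lt_irr lt_trans lt_total lt_add _ P PG.
exact: indicial_root_initial_exponent (fsol P PG) hw.
Qed.
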